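(* Let $G$ be a directed multigraph, let $s$ and $t$ be two distinct vertices, let $S$ be the latest $(s,t)$-mincut, let $R$ be the set of vertices reachable from $s$ in the induced subgraph $G[S]$, and let $x$ be an exit point of $S$ with $x\neq t$. Then $\lambda(R\cup\{x\},t)>\mathit{out}(S)$.
   Context: For a vertex set $S$, $\mathit{out}(S)$ is the number of edges $(x,y)$ with $x\in S$, $y\notin S$ (outgoing edges of $S$); an exit point of $S$ is the head of an outgoing edge of $S$. For disjoint vertex sets $X,Y$, $\lambda(X,Y)$ is the minimum of $\mathit{out}(S)$ over vertex sets $S$ with $X\subseteq S$, $S\cap Y=\emptyset$ (single vertices are identified with singletons). An $(s,t)$-mincut is a set $S$ with $s\in S$, $t\notin S$, $\mathit{out}(S)=\lambda(s,t)$; the latest $(s,t)$-mincut is the inclusion-wise maximum $(s,t)$-mincut (which exists). *)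

(* A directed multigraph on a finite vertex type V with a
   finite edge type E and endpoint maps src, dst : E -> V (parallel edges and
   loops allowed). *)
From mathcomp Require Import all_boot.
Set Implicit Arguments. Unset Strict Implicit. Unset Printing Implicit Defensive.

Section Graph.
Variables (V E : finType) (src dst : E -> V).

Definition out_edges (S : {set V}) : {set E} :=
  [set e | (src e \in S) && (dst e \notin S)].

Definition out (S : {set V}) : nat := #|out_edges S|.

Definition exit_point (S : {set V}) (x : V) : Prop :=
  exists e, e \in out_edges S /\ dst e = x.

(* lambda(X,Y) = min of out(S) over X \subset S, S disjoint from Y.
   (out S <= #|E| always, so #|E| is a neutral start value; when no such S
   exists the value is #|E|, never relevant below.) *)
Definition lambda (X Y : {set V}) : nat :=
  \big[minn/#|E|]_(S : {set V} | (X \subset S) && [disjoint S & Y]) out S.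

Definition is_mincut (s t : V) (S : {set V}) : Prop :=
  s \in S /\ t \notin S /\ out S = lambda [set s] [set t].

Definition is_latest_mincut (s t : V) (S : {set V}) : Prop :=
  is_mincut s t S /\ forall S', is_mincut s t S' -> S' \subset S.

Definition induced_rel (S : {set V}) : rel V :=
  fun u v => [exists e, [&& src e == u, dst e == v, u \in S & v \in S]].

Definition reach_in (S : {set V}) (s : V) : {set V} :=
  [set v | connect (induced_rel S) s v].

End Graph.

From mathcomp Require Import all_boot.
Set Implicit Arguments. Unset Strict Implicit. Unset Printing Implicit Defensive.

(** The cut function [out] is submodular, so if an [(s,t)]-cut [T] were no
    larger than the latest mincut [S], then [S :|: T] would again be a mincut;
    maximality of [S] forces [T \subset S].  Every set containing [s] and the
    exit point [x] (which lies outside [S]) and avoiding [t] therefore has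
    strictly more outgoing edges than [S], and so does their minimum. *)

Section Cuts.
Variables (V E : finType) (src dst : E -> V).

Local Notation out := (out src dst).
Local Notation lambda := (lambda src dst).

Lemma outE (X : {set V}) :
  out X = \sum_e ((src e \in X) && (dst e \notin X) : nat).
Proof.
rewrite /out /out_edges -sum1_card big_mkcond /=.
by apply: eq_bigr => e _; rewrite inE; case: ifP.
Qed.

Lemma out_le_card (X : {set V}) : out X <= #|E|.
Proof. exact: max_card. Qed.

Lemma out_submodular (A B : {set V}) :
  out (A :&: B) + out (A :|: B) <= out A + out B.
Proof.
rewrite !outE -!big_split /=; apply: leq_sum => e _; rewrite !inE.
by case: (src e \in A); case: (src e \in B); case: (dst e \in A); case: (dst e \in B).
Qed.

Lemma lambda_le_out (X Y T : {set V}) :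
  X \subset T -> [disjoint T & Y] -> lambda X Y <= out T.
Proof.
move=> XT TY; rewrite /lambda.
elim: (index_enum _) (mem_index_enum T) => // U r IH.
rewrite inE big_cons => /predU1P[<-|Tr]; first by rewrite XT TY geq_minl.
by case: ifP => _; rewrite ?geq_min IH ?orbT.
Qed.

Lemma lambda_gt (n : nat) (X Y T0 : {set V}) :
  X \subset T0 -> [disjoint T0 & Y] ->
  (forall T : {set V}, X \subset T -> [disjoint T & Y] -> n < out T) ->
  n < lambda X Y.
Proof.
move=> XT0 T0Y gt_out; apply: (big_ind (fun m => n < m)).
- exact: leq_trans (gt_out _ XT0 T0Y) (out_le_card _).
- by move=> a b na nb; rewrite leq_min na nb.
- by move=> T /andP[XT TY]; exact: gt_out.
Qed.

Lemma disjoints1r (T : {set V}) (t : V) : [disjoint T & [set t]] = (t \notin T).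
Proof. by rewrite disjoint_sym disjoints1. Qed.

Lemma latest_mincut_out_lt (s t : V) (S T : {set V}) :
  is_latest_mincut src dst s t S -> s \in T -> t \notin T ->
  ~~ (T \subset S) -> out S < out T.
Proof.
move=> [[sS [tS outS]] latest] sT tT; rewrite ltnNge; apply: contra => le_TS.
have cut_ge (U : {set V}) : s \in U -> t \notin U -> out S <= out U.
  by move=> sU tU; rewrite outS; apply: lambda_le_out; rewrite ?sub1set ?disjoints1r.
have le_SI : out S <= out (S :&: T) by apply: cut_ge; rewrite !inE ?sS ?sT ?(negbTE tS).
have le_SU : out S <= out (S :|: T) by apply: cut_ge; rewrite !inE ?sS ?(negbTE tS) ?(negbTE tT).
have out_SU : out (S :|: T) = out S.
  apply/eqP; rewrite eqn_leq le_SU andbT -(leq_add2l (out (S :&: T))).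
  apply: leq_trans (out_submodular S T) _.
  by rewrite addnC leq_add2r (leq_trans le_TS le_SI).
have SU_mincut : is_mincut src dst s t (S :|: T).
  by split; rewrite ?out_SU // !inE ?sS ?(negbTE tS) ?(negbTE tT).
exact: subset_trans (subsetUr S T) (latest _ SU_mincut).
Qed.

Lemma reach_in_subset (S : {set V}) (s : V) : reach_in src dst S s \subset s |: S.
Proof.
apply/subsetP => v; rewrite !inE => /connectP[p s_p ->{v}].
case/lastP: p s_p => [|p y]; first by rewrite eqxx.
rewrite last_rcons rcons_path => /andP[_ /existsP[e /and4P[_ _ _ yS]]].
by rewrite yS orbT.
Qed.

End Cuts.

Theorem mainTheorem6 (V E : finType) (src dst : E -> V) (s t : V)
  (S : {set V}) (x : V) :
  s != t ->
  is_latest_mincut src dst s t S ->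
  exit_point src dst S x ->
  x != t ->
  out src dst S < lambda src dst (x |: reach_in src dst S s) [set t].
Proof.
move=> st latestS [e [eout ex]] xt; have [[_ [tS _]] _] := latestS.
have xS : x \notin S by move: eout; rewrite inE ex => /andP[].
have R_t : x |: reach_in src dst S s \subset [set~ t].
  apply/subsetP => v /setU1P[->|/(subsetP (reach_in_subset _ _ _ _))].
    by rewrite !inE.
  by case/setU1P=> [->|vS]; rewrite !inE; [|apply: contraNneq tS => <-].
apply: (lambda_gt R_t); first by rewrite disjoints1r !inE eqxx.
move=> T /subsetP xR_T; rewrite disjoints1r => tT.
apply: (latest_mincut_out_lt latestS) => //; first by apply: xR_T; rewrite !inE connect0 orbT.
by apply/subsetP => /(_ x (xR_T _ (setU11 _ _))); apply/negP.
Qed.
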